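(* Let $q\ge 2$ and $n,k\in\mathbb{N}$ with $2k\le n$. Suppose there is a function $b:\binom{[2k]}{k}\to A^n$ such that the sets $b(E)[E]$, for $E\in\binom{[2k]}{k}$, are pairwise disjoint. Then there exists $h\in F(n,q)$ having no trivial coordinate function and such that $\kappa^{\min}(h)\ge k$.
   Context: Let $q\ge 2$, $A=\{0,1,\dots,q-1\}$, $[n]=\{1,\dots,n\}$, and let $F(n,q)$ be the set of all maps $A^n\to A^n$. For $f\in F(m,q)$ and $i\in[m]$, $f_i$ is the $i$-th coordinate function and $f^i(x)=(x_1,\dots,x_{i-1},f_i(x),x_{i+1},\dots,x_m)$; for a word $w=(w_1,\dots,w_t)$ over $[m]$, $f^w=f^{w_t}\circ\cdots\circ f^{w_1}$. $\Pi([m])$ is the set of permutations of $[m]$ written as words $(w_1,\dots,w_m)$. $\mathrm{pr}_{[n]}:A^m\to A^n$ is the projection onto the first $n$ coordinates. For $m\ge n$, $(f,w)$ with $f\in F(m,q)$, $w\in\Pi([m])$ sequentializes $h\in F(n,q)$ if $\mathrm{pr}_{[n]}\circ f^w=h\circ\mathrm{pr}_{[n]}$. $\kappa^{\min}(h)$ is the smallest $k\ge 0$ such that there exist $f\in F(n+k,q)$ and $w\in\Pi([n+k])$ with $(f,w)$ sequentializing $h$. A coordinate function $h_i$ is trivial if $h_i(x)=x_i$ for all $x\in A^n$. For a set $I$, $\binom{I}{k}$ is the set of $k$-element subsets of $I$. For $x\in A^n$ and $I\subseteq[n]$, $x[I]=\{x'\in A^n : x'_j=x_j \text{ for all } j\in[n]\setminus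 I\}$. *)

From mathcomp Require Import all_boot.
Set Implicit Arguments. Unset Strict Implicit. Unset Printing Implicit Defensive.

(* A = {0,...,q-1} = 'I_q ; coordinates [n] = {1..n} are rendered as 'I_n (0-indexed). *)
Definition pt (q n : nat) := {ffun 'I_n -> 'I_q}.

Definition upd (q m : nat) (f : pt q m -> pt q m) (i : 'I_m) (x : pt q m) : pt q m :=
  [ffun j => if j == i then f x i else x j].

(* f^w = f^{w_t} o ... o f^{w_1}  (w_1 applied first) *)
Definition upd_word (q m : nat) (f : pt q m -> pt q m) (w : seq 'I_m) (x : pt q m) : pt q m :=
  foldl (fun y i => upd f i y) x w.

Definition is_perm_word (m : nat) (w : seq 'I_m) : bool := perm_eq w (enum 'I_m).

Definition proj (q n k : nat) (x : pt q (n + k)) : pt q n := [ffun j : 'I_n => x (lshift k j)].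

Definition sequentializes (q n k : nat) (h : pt q n -> pt q n)
  (f : pt q (n + k) -> pt q (n + k)) (w : seq 'I_(n + k)) : Prop :=
  is_perm_word w /\ forall x, @proj q n k (upd_word f w x) = h (@proj q n k x).

Definition sequentializable_with (q n : nat) (h : pt q n -> pt q n) (k : nat) : Prop :=
  exists (f : pt q (n + k) -> pt q (n + k)) (w : seq 'I_(n + k)), sequentializes h f w.

Definition kappa_min_ge (q n : nat) (h : pt q n -> pt q n) (k : nat) : Prop :=
  forall k', k' < k -> ~ sequentializable_with h k'.

Definition trivial_coord (q n : nat) (h : pt q n -> pt q n) (i : 'I_n) : Prop :=
  forall x, h x i = x i.

Definition box (q n : nat) (x : pt q n) (I : {set 'I_n}) : {set pt q n} :=
  [set x' : pt q n | [forall j, (j \notin I) ==> (x' j == x j)]].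

(* E is a k-element subset of [2k] (viewed inside [n]) *)
Definition ksub2k (n k : nat) (E : {set 'I_n}) : bool :=
  (E \subset [set j : 'I_n | j < 2 * k]) && (#|E| == k).

From mathcomp Require Import all_boot zify.
Set Implicit Arguments. Unset Strict Implicit. Unset Printing Implicit Defensive.

(* For each k-subset E of the first 2k coordinates, h copies the k free
   coordinates of the box b(E)[E] onto the other k coordinates of [2k] and is
   constant elsewhere, so h is injective on that box, of size q^k.  Given a
   sequentialization with k' extra coordinates, stop at the moment when exactly
   k of the first 2k coordinates have been updated, and let E be them.  On the
   box of E every original coordinate then holds a constant: updated ones
   already hold their (constant) final value, the others still hold b(E).  So
   the state at that moment, hence the output, is a function of the k' extra
   coordinates, and q^k <= q^k'.  Every constant value is shifted by ordS, which
   keeps all coordinates of h nontrivial. *)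

Lemma card_count_uniq (T : finType) (p : pred T) (s : seq T) :
  uniq s -> #|[set x in s | p x]| = count p s.
Proof.
move=> s_uniq; rewrite -size_filter -(card_uniqP (filter_uniq p s_uniq)).
by apply: eq_card => x; rewrite inE mem_filter andbC.
Qed.

Lemma count_ord_lt m c : c <= m -> count (fun i : 'I_m => i < c) (enum 'I_m) = c.
Proof.
move=> cm; rewrite -(count_map val (fun i => i < c)) val_enum_ord -size_filter.
by rewrite (filter_iota_ltn 0 cm) size_iota.
Qed.

Lemma card_ord_lt m c : c <= m -> #|[set i : 'I_m | i < c]| = c.
Proof.
move=> cm; rewrite -[RHS](count_ord_lt cm) -card_count_uniq ?enum_uniq //.
by apply: eq_card => i; rewrite !inE mem_enum.
Qed.

Lemma count_take_eq (T : Type) (p : pred T) (s : seq T) c :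
  c <= count p s -> exists t, count p (take t s) = c.
Proof.
elim: s c => [|x s IH] c hc; first by exists 0; case: c hc.
case: c hc => [|c] hc; first by exists 0; rewrite take0.
rewrite /= in hc; case px: (p x) in hc.
- by have [t ht] := IH c hc; exists t.+1; rewrite /= px ht.
- by have [t ht] := IH c.+1 hc; exists t.+1; rewrite /= px ht.
Qed.

Lemma ordS_neq m (i : 'I_m) : 1 < m -> ordS i != i.
Proof.
move=> m_gt1; rewrite -val_eqE /=.
case: (ltnP i.+1 m) => im; first by rewrite modn_small // gtn_eqF.
have -> : i.+1 = m by have := ltn_ord i; lia.
by rewrite modnn; lia.
Qed.

Lemma mem_box_self q n (x : pt q n) E : x \in box x E.
Proof. by rewrite inE; apply/forallP => j; apply/implyP. Qed.

Lemma box_agree q n (x y : pt q n) E j : y \in box x E -> j \notin E -> y j = x j.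
Proof. by rewrite inE => /forallP/(_ j)/implyP H /H/eqP. Qed.

Lemma card_box q n (x : pt q n) (E : {set 'I_n}) : #|box x E| = q ^ #|E|.
Proof.
pose F j : pred 'I_q := if j \in E then predT else pred1 (x j).
have -> : #|box x E| = #|family F|.
  apply: eq_card => y; rewrite inE.
  by apply/idP/idP => [/forallP H | /familyP H]; [apply/familyP | apply/forallP] => j;
    have := H j; rewrite /F; case: (j \in E).
rewrite card_family foldrE big_image /= (bigID (mem E)) /=.
rewrite [X in _ * X]big1 => [|j /negbTE jE]; last by rewrite /F jE card1.
by rewrite muln1 -prod_nat_const; apply: eq_bigr => j jE; rewrite /F jE card_ord.
Qed.

Definition rank_match (T : finType) (A B : {set T}) (j : T) : T :=
  nth j (enum A) (index j (enum B)).

Lemma rank_match_onto (T : finType) (A B : {set T}) a :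
  #|A| = #|B| -> a \in A -> exists2 j, j \in B & rank_match A B j = a.
Proof.
move=> AB aA; set i := index a (enum A).
have iA : i < size (enum A) by rewrite index_mem mem_enum.
have iB : i < size (enum B) by rewrite -cardE -AB cardE.
exists (nth a (enum B) i); first by rewrite -mem_enum mem_nth.
rewrite /rank_match index_uniq ?enum_uniq //.
by rewrite (set_nth_default a) // nth_index ?mem_enum.
Qed.

Lemma upd_word_cat q m (f : pt q m -> pt q m) u v x :
  upd_word f (u ++ v) x = upd_word f v (upd_word f u x).
Proof. by rewrite /upd_word foldl_cat. Qed.

Lemma upd_word_notin q m (f : pt q m -> pt q m) (u : seq 'I_m) x j :
  j \notin u -> upd_word f u x j = x j.
Proof.
elim: u x => [|i u IH] x //; rewrite inE negb_or => /andP[ji ju].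
by rewrite (upd_word_cat f [:: i]) IH // ffunE (negbTE ji).
Qed.

Definition updated_coords n k (w : seq 'I_(n + k)) t : {set 'I_n} :=
  [set j | lshift k j \in take t w].

Lemma card_updated_coords_lt n k (w : seq 'I_(n + k)) t c : uniq w -> c <= n ->
  #|[set j : 'I_n | j < c] :&: updated_coords w t| = count (fun i : 'I_(n + k) => i < c) (take t w).
Proof.
move=> w_uniq cn; rewrite -card_count_uniq ?take_uniq //.
rewrite -(card_imset _ (@lshift_inj n k)); apply: eq_card => i; rewrite !inE.
apply/imsetP/andP => [[j] | [iw ic]]; first by rewrite !inE => /andP[jc jw] ->.
have i_lt_n : i < n by lia.
have ei : lshift k (Ordinal i_lt_n) = i by apply: val_inj.
by exists (Ordinal i_lt_n); rewrite // !inE ei iw andbT.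
Qed.

Lemma exists_prefix_updating n k (w : seq 'I_(n + k)) c m : is_perm_word w -> m <= c -> c <= n ->
  exists t, #|[set j : 'I_n | j < c] :&: updated_coords w t| = m.
Proof.
move=> w_perm mc cn; have w_uniq : uniq w by rewrite (perm_uniq w_perm) enum_uniq.
have [t ht] : exists t, count (fun i : 'I_(n + k) => i < c) (take t w) = m.
  by apply: count_take_eq; rewrite (permP w_perm) count_ord_lt ?(leq_trans cn) ?leq_addr.
by exists t; rewrite card_updated_coords_lt.
Qed.

Section Sequentialization.

Variables (q n k : nat) (h : pt q n -> pt q n).
Variables (f : pt q (n + k) -> pt q (n + k)) (w : seq 'I_(n + k)).
Hypothesis fw_seq : sequentializes h f w.

Lemma sequentializes_prefix_state t (x x' : pt q (n + k)) :
  {in [predC take t w], x =1 x'} ->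
  {in updated_coords w t, h (proj x) =1 h (proj x')} ->
  (forall i, upd_word f (take t w) x (rshift n i) = upd_word f (take t w) x' (rshift n i)) ->
  h (proj x) = h (proj x').
Proof.
case: fw_seq => w_perm hw; set P := take t w; set S := drop t w.
have w_uniq : uniq (P ++ S) by rewrite cat_take_drop (perm_uniq w_perm) enum_uniq.
have hPS z : h (proj z) = proj (upd_word f S (upd_word f P z)).
  by rewrite -hw -upd_word_cat cat_take_drop.
have final z j : lshift k j \in P -> upd_word f P z (lshift k j) = h (proj z) j.
  move=> jP; rewrite hPS ffunE [RHS]upd_word_notin //.
  move: w_uniq; rewrite cat_uniq => /and3P[_ /hasPn PS _].
  by apply/negP => jS; move: (PS _ jS); rewrite /= jP.
move=> out upd extra; rewrite !hPS; congr (proj (upd_word f S _)).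
apply/ffunP => i; rewrite -(splitK i); case: split => j /=; last exact: extra.
case jP: (lshift k j \in P); first by rewrite !final // upd // inE.
by rewrite !upd_word_notin ?jP // out // inE /= jP.
Qed.

Lemma card_le_prefix t (X : {set pt q n}) : 0 < q ->
  {in X &, injective h} ->
  {in X &, forall y y' : pt q n, {in ~: updated_coords w t, y =1 y'}} ->
  {in X &, forall y y' : pt q n, {in updated_coords w t, h y =1 h y'}} ->
  #|X| <= q ^ k.
Proof.
move=> q_gt0 h_inj out upd.
pose ext (y : pt q n) : pt q (n + k) :=
  [ffun i => if split i is inl j then y j else Ordinal q_gt0].
have ext_lshift y j : ext y (lshift k j) = y j.
  by rewrite ffunE (unsplitK (inl _ j)).
have proj_ext y : proj (ext y) = y by apply/ffunP => j; rewrite ffunE ext_lshift.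
pose state y : {ffun 'I_k -> 'I_q} := [ffun i => upd_word f (take t w) (ext y) (rshift n i)].
have state_inj : {in X &, injective state}.
  move=> y y' yX y'X e; apply: h_inj => //; rewrite -[y]proj_ext -[y']proj_ext.
  apply: (sequentializes_prefix_state (t := t)) => [i|j|i].
  - rewrite inE -(splitK i); case: split => j /= jP; last by rewrite !ffunE (unsplitK (inr _ j)).
    by rewrite !ext_lshift (out y y') // !inE.
  - by rewrite !proj_ext; apply: upd.
  - by have := congr1 (fun s : {ffun 'I_k -> 'I_q} => s i) e; rewrite !ffunE.
rewrite -(card_in_imset state_inj); apply: leq_trans (max_card _) _.
by rewrite card_ffun !card_ord.
Qed.

End Sequentialization.

Section Construction.

Variables (q n k : nat) (b : {set 'I_n} -> pt q n).
Hypotheses (q_gt1 : 1 < q) (k2_le_n : 2 * k <= n).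
Hypothesis b_disj : forall E E' : {set 'I_n}, ksub2k k E -> ksub2k k E' -> E != E' ->
  [disjoint box (b E) E & box (b E') E'].

Definition low2k : {set 'I_n} := [set j : 'I_n | j < 2 * k].

Definition encode E (y : pt q n) : pt q n :=
  [ffun j => if j \in low2k :\: E then y (rank_match E (low2k :\: E) j) else ordS (b E j)].

Definition hmap (y : pt q n) : pt q n :=
  if [pick E | ksub2k k E && (y \in box (b E) E)] is Some E then encode E y
  else [ffun j => ordS (y j)].

Lemma hmap_box E y : ksub2k k E -> y \in box (b E) E -> hmap y = encode E y.
Proof.
move=> kE yE; rewrite /hmap; case: pickP => [E' /andP[kE' yE'] | none]; last first.
  by have := none E; rewrite kE yE.
have [-> // | E'E] := eqVneq E' E.
by have := disjointFr (b_disj kE' kE E'E) yE'; rewrite yE.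
Qed.

Lemma card_low2k : #|low2k| = 2 * k.
Proof. exact: card_ord_lt. Qed.

Lemma ksub2k_compl E : ksub2k k E -> ksub2k k (low2k :\: E).
Proof.
case/andP=> /setIidPr EH /eqP cE; apply/andP; split; first exact: subsetDl.
by rewrite cardsD EH card_low2k cE; apply/eqP; lia.
Qed.

Lemma hmap_nontrivial i : ~ trivial_coord hmap i.
Proof.
pose L := [set j : 'I_n | j < k].
have kL : ksub2k k L.
  rewrite /ksub2k card_ord_lt; last by lia.
  by rewrite eqxx andbT; apply/subsetP => j; rewrite !inE; lia.
have [E kE iE] : exists2 E, ksub2k k E & i \notin low2k :\: E.
  case iL: (i \in L); first by exists L; rewrite // in_setD iL.
  exists (low2k :\: L); first exact: ksub2k_compl.
  by rewrite !in_setD iL andNb.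
move=> triv; have := triv (b E).
rewrite (hmap_box kE (mem_box_self _ _)) ffunE (negbTE iE).
by apply/eqP; apply: ordS_neq.
Qed.

Lemma encode_inj E : ksub2k k E -> {in box (b E) E &, injective (encode E)}.
Proof.
move=> kE y y' yE y'E e; apply/ffunP => j; case jE: (j \in E); last first.
  by rewrite (box_agree yE (negbT jE)) (box_agree y'E (negbT jE)).
have /andP[_ /eqP cE] := ksub2k_compl kE; move: kE => /andP[_ /eqP cE'].
have [d dD <-] := rank_match_onto (etrans cE' (esym cE)) jE.
by have := congr1 (fun g : pt q n => g d) e; rewrite !ffunE dD.
Qed.

Lemma hmap_kappa_min : kappa_min_ge hmap k.
Proof.
move=> k' k'_lt [f [w [w_perm fw]]].
have [t cE] : exists t, #|low2k :&: updated_coords w t| = k.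
  by apply: (exists_prefix_updating w_perm _ k2_le_n); lia.
pose E := low2k :&: updated_coords w t.
have kE : ksub2k k E by rewrite /ksub2k subsetIl cE eqxx.
suff : q ^ k <= q ^ k' by rewrite leqNgt ltn_exp2l // k'_lt.
rewrite -cE -(card_box (b E)); apply: (card_le_prefix (conj w_perm fw) (t := t) (ltnW q_gt1)).
- by move=> y y' yE y'E; rewrite !(hmap_box kE) //; apply: encode_inj.
- move=> y y' yE y'E j; rewrite inE => jC.
  have jE : j \notin E by rewrite inE (negPf jC) andbF.
  by rewrite (box_agree yE jE) (box_agree y'E jE).
- move=> y y' yE y'E j jC; rewrite !(hmap_box kE) // !ffunE.
  have jD : (j \in low2k :\: E) = false by move: jC; rewrite !inE => ->; rewrite andbT andNb.
  by rewrite jD.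
Qed.

End Construction.

Theorem mainTheorem4 (q n k : nat) (hq : 1 < q) (hk : 2 * k <= n)
  (b : {set 'I_n} -> pt q n)
  (hdisj : forall E E' : {set 'I_n}, ksub2k k E -> ksub2k k E' -> E != E' ->
           [disjoint box (b E) E & box (b E') E']) :
  exists h : pt q n -> pt q n,
    (forall i : 'I_n, ~ trivial_coord h i) /\ kappa_min_ge h k.
Proof.
exists (hmap k b); split.
- exact: hmap_nontrivial.
- exact: hmap_kappa_min.
Qed.
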